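(* A point $\mathbf{x}\in\Delta^0$ is a global maximizer of the problem $\max\{f(\mathbf{x}):\mathbf{x}\in\Delta^0\}$ if and only if $\mathbf{x}=\mathbf{x}(C)$ for some maximum clique $C$ of $G$.
   Context: Let $G=(\mathcal{V},\mathcal{E})$ be a simple undirected graph on vertex set $\mathcal{V}=\{1,\dots,n\}$ with adjacency matrix $\mathbf{A}=(a_{ij})$ ($a_{ij}=1$ if $(i,j)\in\mathcal{E}$, else $0$; $a_{ii}=0$). A clique is a subset $C\subseteq\mathcal{V}$ with $(i,j)\in\mathcal{E}$ for all distinct $i,j\in C$; a maximum clique is one of largest cardinality. Let $\Delta=\{\mathbf{x}\in\mathbb{R}^n:\mathbf{0}\le\mathbf{x}\le\mathbf{1},\ \mathbf{1}^{\mathsf T}\mathbf{x}=1\}$, $\mathrm{supp}(\mathbf{x})=\{i:x_i\neq0\}$, and $\Delta^0=\{\mathbf{x}\in\Delta:\mathrm{supp}(\mathbf{x})\text{ is a clique}\}$. For a non-empty clique $C$, $\mathbf{x}(C)\in\Delta$ has $x(C)_i=1/|C|$ for $i\in C$ and $0$ otherwise. For $\mathbf{x}\in\Delta$, $\mathcal{P}(\mathbf{x})$ is the set of vectors in $\Delta$ obtained by permuting the coordinates of $\mathbf{x}$. Let $\Phi:X\to\mathbb{R}$ be twice continuously differentiable on an open set $X\supset\Delta$, satisfying for every $\mathbf{x}\in\Delta$: (C1) $\nabla^2\Phi(\mathbf{x})$ is positive semidefinite; (C2) $\|\nabla^2\Phi(\mathbf{x})\|_2<2$; (C3) $\Phi$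 is constant on $\mathcal{P}(\mathbf{x})$. Define $f(\mathbf{x})=\mathbf{x}^{\mathsf T}\mathbf{A}\mathbf{x}+\Phi(\mathbf{x})$. *)

From HB Require Import structures.
From mathcomp Require Import all_boot all_order all_algebra all_fingroup.
From mathcomp Require Import all_classical all_reals all_analysis.
Set Implicit Arguments. Unset Strict Implicit. Unset Printing Implicit Defensive.
Import Order.TTheory GRing.Theory Num.Theory.
Import numFieldNormedType.Exports.
Local Open Scope classical_set_scope.
Local Open Scope ring_scope.

Section Defs.
Variables (R : realType) (n : nat).

Definition simple_graph (adj : rel 'I_n) : Prop :=
  (forall i j, adj i j = adj j i) /\ (forall i, ~~ adj i i).

Definition adjmx (adj : rel 'I_n) : 'M[R]_n := \matrix_(i, j) (adj i j)%:R.

Definition is_clique (adj : rel 'I_n) (C : {set 'I_n}) : Prop :=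
  forall i j, i \in C -> j \in C -> i != j -> adj i j.

Definition is_maximum_clique (adj : rel 'I_n) (C : {set 'I_n}) : Prop :=
  is_clique adj C /\ forall D : {set 'I_n}, is_clique adj D -> (#|D| <= #|C|)%N.

Definition simplex : set 'rV[R]_n :=
  [set x | (forall i, 0 <= x 0 i <= 1) /\ \sum_i x 0 i = 1].

Definition supp (x : 'rV[R]_n) : {set 'I_n} := [set i | x 0 i != 0].

Definition simplex0 (adj : rel 'I_n) : set 'rV[R]_n :=
  [set x | simplex x /\ is_clique adj (supp x)].

Definition xC (C : {set 'I_n}) : 'rV[R]_n :=
  \row_i (if i \in C then (#|C|%:R)^-1 else 0).

Definition permv (s : 'S_n) (x : 'rV[R]_n) : 'rV[R]_n := \row_i x 0 (s i).

Definition evec (i : 'I_n) : 'rV[R]_n := \row_k (k == i)%:R.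

Definition hessian (Phi : 'rV[R]_n -> R) (x : 'rV[R]_n) : 'M[R]_n :=
  \matrix_(i, j) derive (fun y => derive Phi y (evec j)) x (evec i).

Definition C2_on (X : set 'rV[R]_n) (Phi : 'rV[R]_n -> R) : Prop :=
  forall x, X x ->
    {for x, continuous Phi} /\
    forall i j : 'I_n,
      [/\ derivable Phi x (evec i),
          derivable (fun y => derive Phi y (evec j)) x (evec i),
          {for x, continuous (fun y => derive Phi y (evec i))} &
          {for x, continuous (fun y => derive (fun z => derive Phi z (evec j)) y (evec i))}].

Definition psd (H : 'M[R]_n) : Prop :=
  forall v : 'cV[R]_n, 0 <= (v^T *m H *m v) 0 0.

Definition enorm (u : 'cV[R]_n) : R := Num.sqrt (\sum_i u i 0 ^+ 2).

Definition opnorm2 (H : 'M[R]_n) : R :=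
  sup [set enorm (H *m u) | u in [set u : 'cV[R]_n | enorm u = 1]].

Definition fobj (adj : rel 'I_n) (Phi : 'rV[R]_n -> R) (x : 'rV[R]_n) : R :=
  (x *m adjmx adj *m x^T) 0 0 + Phi x.

End Defs.
Arguments simplex {R n}.
Arguments simplex0 {R n}.
Arguments xC {R n}.

(* On Delta^0 the quadratic form x A x^T equals 1 - |x|^2, so f = 1 + g with
   g = Phi - |.|^2, and (C2) makes g strictly concave on Delta.  At x(T) the
   symmetry (C3) forces the partial derivatives of Phi to agree on T, so the
   derivative of g at x(T) vanishes along the face of Delta supported in T and
   x(T) is the strict maximiser of g on that face.  Transpositions show that
   g(x(T)) depends only on |T|; as any smaller set has the size of a proper
   subset of T, g(x(T)) strictly increases with |T|.  Hence on Delta^0,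
   f(y) <= f(x(supp y)) <= f(x(C)) for a maximum clique C, with equality
   exactly when y = x(supp y) and supp y is a maximum clique. *)

From HB Require Import structures.
From mathcomp Require Import all_boot all_order all_algebra all_fingroup.
From mathcomp Require Import all_classical all_reals all_analysis.
From mathcomp Require Import ring lra.
Import Order.TTheory GRing.Theory Num.Theory.
Import numFieldNormedType.Exports.
Local Open Scope classical_set_scope.
Local Open Scope ring_scope.
Set Implicit Arguments. Unset Strict Implicit. Unset Printing Implicit Defensive.

Section RealAnalysis.
Variable R : realType.

Lemma is_derive_cvg (V W : normedModType R) (f : V -> W) (a v : V) (l : W) :
  (fun h : R => h^-1 *: ((f \o shift a) (h *: v) - f a)) @ 0^' --> l ->
  is_derive a v f l.
Proof. by move=> fl; apply: DeriveDef; [apply/cvg_ex; exists l | exact: cvg_lim]. Qed.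

Lemma near_dnbhs0 (P : R -> Prop) :
  (exists2 e : R, 0 < e & forall h, `|h| < e -> h != 0 -> P h) ->
  \forall h \near 0^', P h.
Proof.
move=> [e e0 eP]; rewrite near_withinE; apply/nbhs_ballP; exists e => // h.
by rewrite /ball /= sub0r normrN; exact: eP.
Qed.

Lemma MVT_origin (f df : R -> R) (w : R) :
  (forall s, `|s| <= `|w| -> is_derive s (1 : R) f (df s)) ->
  exists c, `|c| <= `|w| /\ f w - f 0 = df c * w.
Proof.
move=> fdf.
have fcont s : `|s| <= `|w| -> {for s, continuous f}.
  move=> sw; apply: differentiable_continuous; apply/derivable1_diffP.
  by have [] := fdf s sw.
have [w0|w0|->] := ltrgtP w 0; last by exists 0; rewrite normr0 subrr mulr0.
- have df_in s : s \in `]w, 0[ -> is_derive s (1 : R) f (df s).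
    rewrite in_itv /= => /andP[ws s0]; apply: fdf.
    by rewrite !ltr0_norm // lerN2 ltW.
  have f_cont : {within `[w, 0], continuous f}.
    apply: continuous_in_subspaceT => s; rewrite inE /= in_itv /= => /andP[ws s0].
    by apply: fcont; rewrite ler0_norm // ltr0_norm // lerN2.
  have [c] := MVT_segment (ltW w0) df_in f_cont.
  rewrite in_itv /= => /andP[wc c0] E; exists c.
  split; first by rewrite ler0_norm // ltr0_norm // lerN2.
  by rewrite -[LHS]opprB E sub0r mulrN opprK.
- have df_in s : s \in `]0, w[ -> is_derive s (1 : R) f (df s).
    rewrite in_itv /= => /andP[s0 sw]; apply: fdf.
    by rewrite !gtr0_norm // ltW.
  have f_cont : {within `[0, w], continuous f}.
    apply: continuous_in_subspaceT => s; rewrite inE /= in_itv /= => /andP[s0 sw].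
    by apply: fcont; rewrite ger0_norm // gtr0_norm.
  have [c] := MVT_segment (ltW w0) df_in f_cont.
  rewrite in_itv /= => /andP[c0 cw] E; exists c.
  by split; [rewrite ger0_norm // gtr0_norm | rewrite E subr0].
Qed.

Lemma taylor2_lt (phi phi1 phi2 : R -> R) (C : R) :
  (forall t : R, 0 <= t <= 1 -> is_derive t (1 : R) phi (phi1 t)) ->
  (forall t : R, 0 <= t <= 1 -> is_derive t (1 : R) phi1 (phi2 t)) ->
  (forall t : R, 0 <= t <= 1 -> phi2 t < 2 * C) ->
  phi 1 - phi 0 - phi1 0 < C.
Proof.
move=> dphi dphi1 phi2_lt.
pose r s := phi s - C * s ^+ 2.
pose r1 s := phi1 s - C * (2 * s).
have dr (t : R) : 0 <= t <= 1 -> is_derive t (1 : R) r (r1 t).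
  move=> t01; apply: is_deriveB; first exact: dphi.
  apply: is_derive_eq; rewrite /= [_ *: 1]mulr1 /GRing.scale /=; ring.
have dr1 (t : R) : 0 <= t <= 1 -> is_derive t (1 : R) r1 (phi2 t - C * 2).
  move=> t01; apply: is_deriveB; first exact: dphi1.
  by apply: is_derive_eq; rewrite /= [_ *: 1]mulr1 /GRing.scale /= mulrC.
have in01 (a b t : R) : 0 <= a -> b <= 1 -> t \in `]a, b[ -> 0 <= t <= 1.
  move=> a0 b1; rewrite in_itv /= => /andP[a_t t_b].
  by rewrite (le_trans a0 (ltW a_t)) (le_trans (ltW t_b) b1).
have cont01 (f df : R -> R) (b : R) : b <= 1 ->
    (forall t : R, 0 <= t <= 1 -> is_derive t (1 : R) f (df t)) ->
    {within `[0, b], continuous f}.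
  move=> b1 fdf; apply: continuous_in_subspaceT => t.
  rewrite inE /= in_itv /= => /andP[t0 tb].
  apply: differentiable_continuous; apply/derivable1_diffP.
  by have [] := fdf t; rewrite ?t0 ?(le_trans tb b1).
have [xi xi01 E1] := MVT ltr01 (fun t => dr t \o in01 _ _ t (lexx 0) (lexx 1))
  (cont01 _ _ _ (lexx 1) dr).
move: (xi01); rewrite in_itv /= => /andP[xi0 xi1].
have [eta eta0xi E2] := MVT xi0 (fun t => dr1 t \o in01 _ _ t (lexx 0) (ltW xi1))
  (cont01 _ _ _ (ltW xi1) dr1).
have r1_dec : r1 xi < r1 0.
  rewrite -subr_lt0 E2 pmulr_llt0 ?subr0 // subr_lt0 mulrC phi2_lt //.
  exact: in01 (lexx 0) (ltW xi1) eta0xi.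
move: E1 r1_dec; rewrite /r /r1 subr0 !mulr1 !mulr0 expr1n expr0n /=; lra.
Qed.

End RealAnalysis.

Section DirectionalDerivative.
Variables (R : realType) (n : nat).
Implicit Types (F : 'rV[R]_n -> R) (a d : 'rV[R]_n).

Lemma ball_row a (y : 'rV[R]_n) (r : R) :
  0 < r -> (forall j, `|a 0 j - y 0 j| < r) -> ball a r y.
Proof. by move=> r0 ay; split => // i j; rewrite (ord1 i); exact: ay. Qed.

Lemma is_derive_line F a d (t : R) :
  derivable F (a + t *: d) d ->
  is_derive t (1 : R) (fun s => F (a + s *: d)) (derive F (a + t *: d) d).
Proof.
move=> Fd; apply: is_derive_cvg; apply: cvg_trans Fd; apply: near_eq_cvg.
near=> h => /=; congr (_ *: (F _ - _)).
by rewrite [_%:A]mulr1 scalerDl addrCA.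
Unshelve. all: by end_near. Qed.

Definition row_prefix (k : nat) d : 'rV[R]_n :=
  \row_j (if (j < k)%N then d 0 j else 0).

Lemma row_prefix0 d : row_prefix 0 d = 0.
Proof. by apply/rowP => j; rewrite !mxE. Qed.

Lemma row_prefixn d : row_prefix n d = d.
Proof. by apply/rowP => j; rewrite !mxE ltn_ord. Qed.

Lemma row_prefixS (k : 'I_n) d :
  row_prefix k.+1 d = row_prefix k d + d 0 k *: evec R k.
Proof.
apply/rowP => j; rewrite !mxE ltnS.
have [jk|jk|/val_inj ->] := ltngtP j k; last by rewrite eqxx mulr1 add0r.
- by rewrite -val_eqE /= (ltn_eqF jk) mulr0 addr0.
- by rewrite -val_eqE /= (gtn_eqF jk) mulr0 addr0.
Qed.

Lemma ball_row_prefix_evec a d (k : 'I_n) (h s rho : R) :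
  0 < rho -> `|h| * (\sum_j `|d 0 j| + 1) < rho -> `|s| <= `|h * d 0 k| ->
  ball a rho (a + h *: row_prefix k d + s *: evec R k).
Proof.
move=> rho0 h_lt s_le; apply: ball_row => // j.
have d_le i : `|d 0 i| <= \sum_j `|d 0 j| + 1.
  by rewrite (bigD1 i) //= -addrA lerDl addr_ge0 ?sumr_ge0.
rewrite !mxE -addrA opprD addrA subrr sub0r normrN.
apply: le_lt_trans h_lt; have [->|jk] := eqVneq j k.
  by rewrite ltnn mulr0 add0r mulr1 (le_trans s_le) // normrM ler_wpM2l.
rewrite mulr0 addr0 normrM ler_wpM2l //.
by case: ifP => _; rewrite ?normr0 ?d_le ?addr_ge0 ?sumr_ge0.
Qed.

Section Partials.
Variables (F : 'rV[R]_n -> R) (X : set 'rV[R]_n).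
Hypothesis X_open : open X.
Hypothesis F_partial : forall x, X x -> forall i, derivable F x (evec R i).
Hypothesis F_partial_cont :
  forall x, X x -> forall i, {for x, continuous (fun y => derive F y (evec R i))}.

Lemma MVT_evec p (k : 'I_n) (w : R) :
  (forall s, `|s| <= `|w| -> X (p + s *: evec R k)) ->
  exists c, `|c| <= `|w| /\
    F (p + w *: evec R k) - F p = derive F (p + c *: evec R k) (evec R k) * w.
Proof.
move=> seg.
have := @MVT_origin R (fun s => F (p + s *: evec R k))
  (fun s => derive F (p + s *: evec R k) (evec R k)) w.
rewrite scale0r addr0; apply => s sw.
exact/is_derive_line/F_partial/seg.
Qed.

Lemma cvg_row_prefix_increment a d (k : 'I_n) : X a ->
  (fun h : R => h^-1 * (F (a + h *: row_prefix k.+1 d) - F (a + h *: row_prefix k d)))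
    @ 0^' --> d 0 k * derive F a (evec R k).
Proof.
move=> Xa; have [r r0 rX] : exists2 r : R, 0 < r & ball a r `<=` X.
  by apply/nbhs_ballP; apply: open_nbhs_nbhs.
apply/cvgrPdist_lt => eps eps0; set b := d 0 k.
have b1_gt0 : 0 < `|b| + 1 by rewrite ltr_wpDl.
have /cvgrPdist_lt/(_ (eps / (`|b| + 1))) := @F_partial_cont a Xa k.
move=> /(_ (divr_gt0 eps0 b1_gt0)) /nbhs_ballP [del del0 delP].
set M := \sum_j `|d 0 j| + 1.
have M0 : 0 < M by rewrite ltr_wpDl ?sumr_ge0.
set rho := Num.min r del.
have rho0 : 0 < rho by rewrite lt_min r0 del0.
have rho_r : rho <= r by rewrite ge_min lexx.
have rho_del : rho <= del by rewrite ge_min lexx orbT.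
apply: near_dnbhs0; exists (rho / M); first by rewrite divr_gt0.
move=> h h_lt h0; rewrite ltr_pdivlMr // in h_lt.
have near_a s : `|s| <= `|h * b| -> ball a rho (a + h *: row_prefix k d + s *: evec R k).
  exact: ball_row_prefix_evec.
have [c [cb ->]] : exists c, `|c| <= `|h * b| /\
    F (a + h *: row_prefix k.+1 d) - F (a + h *: row_prefix k d) =
    derive F (a + h *: row_prefix k d + c *: evec R k) (evec R k) * (h * b).
  rewrite row_prefixS scalerDr addrA scalerA; apply: MVT_evec => s sb.
  by apply/rX/(le_ball rho_r)/near_a.
rewrite mulrCA mulKf // mulrC -mulrBl normrM mulrC.
have /delP/ltW Fc := le_ball rho_del (near_a _ cb).
apply: (le_lt_trans (ler_wpM2l (normr_ge0 b) Fc)).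
by rewrite mulrA ltr_pdivrMr // mulrDr mulr1 mulrC ltrDl.
Qed.

Lemma is_derive_partials a d : X a ->
  is_derive a d F (\sum_k d 0 k * derive F a (evec R k)).
Proof.
move=> Xa; apply: is_derive_cvg.
have -> : (fun h : R => h^-1 *: ((F \o shift a) (h *: d) - F a)) =
    (fun h => \sum_(k < n)
       h^-1 * (F (a + h *: row_prefix k.+1 d) - F (a + h *: row_prefix k d))).
  apply: funext => h /=; rewrite -mulr_sumr.
  rewrite -(big_mkord xpredT
    (fun k => F (a + h *: row_prefix k.+1 d) - F (a + h *: row_prefix k d))).
  by rewrite telescope_sumr // row_prefixn row_prefix0 scaler0 addr0 [h *: d + a]addrC.
apply: (@cvg_big _ _ +%R 0 xpredT add_continuous) => // k _.
exact: cvg_row_prefix_increment.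
Qed.

End Partials.
End DirectionalDerivative.

Section OperatorNorm.
Variables (R : realType) (n : nat).
Implicit Types (H : 'M[R]_n) (u : 'cV[R]_n).

Lemma enorm_sqr u : enorm u ^+ 2 = \sum_i u i 0 ^+ 2.
Proof. by rewrite sqr_sqrtr // sumr_ge0 // => i _; rewrite sqr_ge0. Qed.

Lemma enormZ (c : R) u : enorm (c *: u) = `|c| * enorm u.
Proof.
rewrite /enorm; under eq_bigr do rewrite mxE exprMn.
by rewrite -mulr_sumr sqrtrM ?sqrtr_sqr // sqr_ge0.
Qed.

Lemma enorm_le_opnorm2 H u : enorm u = 1 -> enorm (H *m u) <= opnorm2 H.
Proof.
move=> u1; apply: sup_upper_bound; last by exists u.
split; first by exists (enorm (H *m u)), u.
exists (Num.sqrt (\sum_i (\sum_k `|H i k|) ^+ 2)) => _ [v /= v1 <-].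
rewrite /enorm ler_sqrt; last by rewrite sumr_ge0 // => i _; rewrite sqr_ge0.
apply: ler_sum => i _.
have v_le1 k : `|v k 0| <= 1.
  have : v k 0 ^+ 2 <= 1.
    rewrite -(expr1n R 2) -v1 enorm_sqr (bigD1 k) //= lerDl.
    by rewrite sumr_ge0 // => j _; rewrite sqr_ge0.
  by move=> v2; rewrite -(@expr_le1 _ 2) // real_normK ?num_real.
have Hv_le : `|(H *m v) i 0| <= \sum_k `|H i k|.
  rewrite mxE; apply: le_trans (ler_norm_sum _ _ _) _.
  by apply: ler_sum => k _; rewrite normrM ler_piMr.
by rewrite -[X in X <= _]real_normK ?num_real // ler_pXn2r ?nnegrE ?sumr_ge0.
Qed.

Lemma quadform_lt_opnorm2 H (v : 'rV[R]_n) (c : R) :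
  opnorm2 H < c -> v != 0 -> (v *m H *m v^T) 0 0 < c * \sum_k v 0 k ^+ 2.
Proof.
move=> Hc v0; set S := \sum_k v 0 k ^+ 2; set u := v^T; set w := H *m u.
have uS : enorm u ^+ 2 = S by rewrite enorm_sqr; apply: eq_bigr => k _; rewrite mxE.
have u_gt0 : 0 < enorm u.
  rewrite lt_def sqrtr_ge0 andbT; apply: contra v0 => /eqP u_eq0.
  apply/eqP/rowP => k; rewrite mxE; apply/eqP; rewrite -sqrf_eq0; apply/eqP.
  have /psumr_eq0P : S = 0 by rewrite -uS u_eq0 expr0n.
  by apply => // j _; rewrite sqr_ge0.
have w_lt : enorm w < c * enorm u.
  have u1 : enorm ((enorm u)^-1 *: u) = 1.
    by rewrite enormZ ger0_norm ?invr_ge0 ?sqrtr_ge0 // mulVf // gt_eqF.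
  have := le_lt_trans (enorm_le_opnorm2 H u1) Hc.
  by rewrite -scalemxAr enormZ ger0_norm ?invr_ge0 ?sqrtr_ge0 // ltr_pdivrMl // mulrC.
have c_gt0 : 0 < c.
  by rewrite -(pmulr_lgt0 _ u_gt0); apply: le_lt_trans w_lt; exact: sqrtr_ge0.
have -> : (v *m H *m v^T) 0 0 = \sum_i u i 0 * w i 0.
  by rewrite -mulmxA mxE; apply: eq_bigr => i _; rewrite /w /u [u i 0]mxE.
have amgm : \sum_i u i 0 * w i 0 <= c / 2 * S + enorm w ^+ 2 / (2 * c).
  rewrite enorm_sqr /S mulr_sumr mulr_suml -big_split /=; apply: ler_sum => i _.
  rewrite mxE; set a := v 0 i; set b := w i 0.
  have -> : c / 2 * a ^+ 2 + b ^+ 2 / (2 * c) = (c * a - b) ^+ 2 / (2 * c) + a * b.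
    by field; rewrite gt_eqF.
  by rewrite lerDr divr_ge0 ?sqr_ge0 // mulr_ge0 // ltW.
apply: (le_lt_trans amgm); rewrite -uS [X in _ < X * _](splitr c) (mulrDl (c / 2)) ltrD2l.
rewrite ltr_pdivrMr ?mulr_gt0 //.
have -> : c / 2 * enorm u ^+ 2 * (2 * c) = (c * enorm u) ^+ 2 by field.
by rewrite ltr_pXn2r ?nnegrE ?sqrtr_ge0 ?mulr_ge0 ?ltW.
Qed.

End OperatorNorm.

Section Simplex.
Variables (R : realType) (n : nat).
Implicit Types (x y c : 'rV[R]_n) (S T : {set 'I_n}).

Lemma sum_delta_mul (i : 'I_n) (F : 'I_n -> R) : \sum_k (k == i)%:R * F k = F i.
Proof. by rewrite (bigD1 i) //= eqxx mul1r big1 ?addr0 // => k /negbTE ->; rewrite mul0r. Qed.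

Lemma sum_delta (i : 'I_n) : \sum_k (k == i)%:R = 1 :> R.
Proof. by rewrite (bigD1 i) //= eqxx big1 ?addr0 // => k /negbTE ->. Qed.

Lemma simplex_segment x y (t : R) : simplex x -> simplex y -> 0 <= t <= 1 ->
  simplex (x + t *: (y - x)).
Proof.
move=> [x01 x1] [y01 y1] /andP[t0 t1]; split.
  move=> i; rewrite !mxE; have /andP[? ?] := x01 i; have /andP[? ?] := y01 i.
  by apply/andP; split; nra.
under eq_bigr do rewrite !mxE.
by rewrite big_split /= -mulr_sumr sumrB x1 y1 subrr mulr0 addr0.
Qed.

Lemma simplex_xC T : (0 < #|T|)%N -> simplex (xC T : 'rV[R]_n).
Proof.
move=> T0; have Tinv_gt0 : 0 < #|T|%:R^-1 :> R by rewrite invr_gt0 ltr0n.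
split.
  move=> k; rewrite mxE; case: ifP => _; rewrite ?lexx ?ler01 // ltW //=.
  by rewrite invf_le1 ?ler1n // ltr0n.
under eq_bigr do rewrite mxE.
by rewrite -big_mkcond /= sumr_const -[_ *+ _]mulr_natr mulVf // pnatr_eq0 -lt0n.
Qed.

Lemma supp_xC T : (0 < #|T|)%N -> supp (xC T : 'rV[R]_n) = T.
Proof.
move=> T0; apply/setP => k; rewrite inE mxE; case: ifP; last by rewrite eqxx.
by rewrite invr_eq0 pnatr_eq0 -lt0n T0.
Qed.

Lemma card_supp_gt0 y : simplex y -> (0 < #|supp y|)%N.
Proof.
move=> [_ y1]; rewrite card_gt0; apply: contra_eqN y1 => /eqP supp0.
rewrite big1 => [|k _]; first by rewrite eq_sym oner_eq0.
have : k \notin supp y by rewrite supp0 inE.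
by rewrite inE negbK => /eqP.
Qed.

Lemma simplex_add_evecB c (i j : 'I_n) (h : R) : simplex c -> i != j ->
  `|h| <= c 0 i -> `|h| <= c 0 j -> simplex (c + h *: (evec R i - evec R j)).
Proof.
move=> [c01 c1] ij hi hj; have ji : j != i by rewrite eq_sym.
have cij : c 0 i + c 0 j <= 1.
  rewrite -c1 (bigD1 i) //= (bigD1 j) //= addrA lerDl sumr_ge0 // => k _.
  by have /andP[] := c01 k.
split.
  move=> k; rewrite !mxE; move/ler_normlP: hi => [hi hi']; move/ler_normlP: hj => [hj hj'].
  have [->|ki] := eqVneq k i.
    by rewrite (negbTE ij) subr0 mulr1; apply/andP; split; lra.
  have [->|kj] := eqVneq k j.
    by rewrite sub0r mulrN1; apply/andP; split; lra.
  by rewrite subrr mulr0 addr0; exact: c01.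
under eq_bigr do rewrite !mxE mulrBr.
by rewrite big_split sumrB /= -!mulr_sumr !sum_delta c1 subrr addr0.
Qed.

Lemma permv_tperm_reflect c (i j : 'I_n) (h : R) : c 0 i = c 0 j ->
  permv (tperm i j) (c + h *: (evec R i - evec R j)) = c - h *: (evec R i - evec R j).
Proof.
move=> cij; apply/rowP => k; rewrite !mxE.
have [->|ki] := eqVneq k i.
  by rewrite tpermL cij !eqxx [j == i]eq_sym; case: (i == j); rewrite /= ?mulr1n ?mulr0n; lra.
have [kj|kj] := eqVneq k j.
  rewrite kj in ki *; rewrite tpermR -cij !eqxx [i == j]eq_sym (negbTE ki) /=.
  by rewrite mulr1n mulr0n; lra.
by rewrite tpermD 1?eq_sym // [i == k]eq_sym (negbTE ki) (negbTE kj) subrr !mulr0 subr0 addr0.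
Qed.

Lemma sum_sqr_permv (s : 'S_n) y : \sum_k (permv s y) 0 k ^+ 2 = \sum_k y 0 k ^+ 2.
Proof.
by rewrite [RHS](reindex_inj (@perm_inj _ s)); apply: eq_bigr => k _; rewrite mxE.
Qed.

Lemma cards_swap T (a b : 'I_n) : a \notin T -> b \in T -> #|a |: (T :\ b)| = #|T|.
Proof.
move=> aT bT; rewrite cardsU1 (cardsD1 b T) bT in_setD1 (negbTE aT) andbF.
by rewrite add1n.
Qed.

Lemma permv_tperm_xC T (a b : 'I_n) : a \notin T -> b \in T ->
  permv (tperm a b) (xC T : 'rV[R]_n) = xC (a |: (T :\ b)).
Proof.
move=> aT bT; apply/rowP => k; rewrite !mxE cards_swap //; congr (if _ then _ else _).
rewrite !inE; have [->|ka] := eqVneq k a; first by rewrite tpermL bT.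
have [->|kb] := eqVneq k b; first by rewrite tpermR (negbTE aT).
by rewrite tpermD // eq_sym.
Qed.

Lemma sum_mul_eq0_const_on T (d g : 'I_n -> R) (g0 : R) :
  {in T, forall k, g k = g0} -> {in ~: T, forall k, d k = 0} -> \sum_k d k = 0 ->
  \sum_k d k * g k = 0.
Proof.
move=> gT dT d0; rewrite (eq_bigr (fun k => d k * g0)) -?mulr_suml ?d0 ?mul0r // => k _.
by have [/gT->|kT] := boolP (k \in T); rewrite // dT ?inE // !mul0r.
Qed.

End Simplex.

Lemma exists_maximum_clique (n : nat) (adj : rel 'I_n) : exists C, is_maximum_clique adj C.
Proof.
have set0_clique : is_clique adj finset.set0 by move=> i j; rewrite inE.
have [C /asboolP C_clique C_max] :=
  @arg_maxnP _ finset.set0 (fun C => `[< is_clique adj C >]) (fun C => #|C|) (asboolT set0_clique).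
by exists C; split => // D /asboolP/C_max.
Qed.

Section Objective.
Variables (R : realType) (n : nat) (Phi : 'rV[R]_n -> R) (X : set 'rV[R]_n).
Hypothesis X_open : open X.
Hypothesis Phi_C2 : C2_on X Phi.

Lemma is_derive_Phi x d : X x ->
  is_derive x d Phi (\sum_k d 0 k * derive Phi x (evec R k)).
Proof.
move=> Xx; apply: (is_derive_partials X_open _ _ d Xx) => y Xy i;
  by have [_ /(_ i i) []] := Phi_C2 Xy.
Qed.

Lemma is_derive_partial_Phi (j : 'I_n) x d : X x ->
  is_derive x d (fun y => derive Phi y (evec R j)) (\sum_i d 0 i * hessian Phi x i j).
Proof.
move=> Xx; under eq_bigr do rewrite mxE.
apply: (is_derive_partials X_open _ _ d Xx) => y Xy i;
  by have [_ /(_ i j) []] := Phi_C2 Xy.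
Qed.

Lemma is_derive_Phi_segment x d (t : R) : X (x + t *: d) ->
  is_derive t (1 : R) (fun s => Phi (x + s *: d))
    (\sum_k d 0 k * derive Phi (x + t *: d) (evec R k)).
Proof. by move=> Xt; have [Phi_d <-] := is_derive_Phi d Xt; exact: is_derive_line. Qed.

Lemma is_derive_grad_segment x d (t : R) : X (x + t *: d) ->
  is_derive t (1 : R) (fun s => \sum_k d 0 k * derive Phi (x + s *: d) (evec R k))
    ((d *m hessian Phi (x + t *: d) *m d^T) 0 0).
Proof.
move=> Xt.
rewrite (_ : (fun s => _) =
    \sum_k (d 0 k \*: fun s => derive Phi (x + s *: d) (evec R k))); last first.
  by apply: funext => s; rewrite fct_sumE.
apply: is_derive_eq.
  apply: is_derive_sum => k; apply: is_deriveZ.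
  have [Phi_kd _] := is_derive_partial_Phi k d Xt.
  exact: (is_derive_line Phi_kd).
rewrite mxE; apply: eq_bigr => k _.
have [_ ->] := is_derive_partial_Phi k d Xt.
by rewrite !mxE mulrC.
Qed.

Hypothesis simplex_sub : simplex `<=` X.
Hypothesis hessian_lt2 : forall x, simplex x -> opnorm2 (hessian Phi x) < 2.

Lemma Phi_sub_tangent_lt x y : simplex x -> simplex y -> x != y ->
  Phi y - Phi x - \sum_k (y - x) 0 k * derive Phi x (evec R k) < \sum_k (y - x) 0 k ^+ 2.
Proof.
move=> sx sy xy; set d := y - x.
have Xt (t : R) : 0 <= t <= 1 -> X (x + t *: d).
  by move=> t01; apply/simplex_sub/simplex_segment.
have := @taylor2_lt R (fun s => Phi (x + s *: d))
  (fun s => \sum_k d 0 k * derive Phi (x + s *: d) (evec R k))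
  (fun s => (d *m hessian Phi (x + s *: d) *m d^T) 0 0) (\sum_k d 0 k ^+ 2).
rewrite scale1r scale0r addr0 [x + d]addrC subrK; apply => t t01.
- exact/is_derive_Phi_segment/Xt.
- exact/is_derive_grad_segment/Xt.
- apply: quadform_lt_opnorm2; first exact/hessian_lt2/simplex_segment.
  by rewrite subr_eq0 eq_sym.
Qed.

Hypothesis Phi_perm : forall x (s : 'S_n), simplex x -> Phi (permv s x) = Phi x.

Lemma partial_Phi_xC (T : {set 'I_n}) (i j : 'I_n) : i \in T -> j \in T ->
  derive Phi (xC T) (evec R i) = derive Phi (xC T) (evec R j).
Proof.
move=> iT jT; have [<-//|ij] := eqVneq i j.
have T_gt0 : (0 < #|T|)%N by apply/card_gt0P; exists i.
set c : 'rV[R]_n := xC T; set v := evec R i - evec R j.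
have ci : c 0 i = #|T|%:R^-1 by rewrite mxE iT.
have cj : c 0 j = #|T|%:R^-1 by rewrite mxE jT.
have Phi_c w : is_derive (0 : R) (1 : R) (fun s => Phi (c + s *: w))
    (\sum_k w 0 k * derive Phi c (evec R k)).
  have := @is_derive_Phi_segment c w 0; rewrite scale0r addr0; apply.
  exact/simplex_sub/simplex_xC.
(* By the symmetry (i j), s |-> Phi (c + s v) is even, so its derivative at 0 vanishes. *)
have even : \forall h \near (0 : R), Phi (c + h *: v) = Phi (c + h *: - v).
  apply/nbhs_ballP; exists #|T|%:R^-1; first by rewrite /= invr_gt0 ltr0n.
  move=> h; rewrite /ball /= sub0r normrN => /ltW h_le.
  rewrite scalerN -(permv_tperm_reflect h (etrans ci (esym cj))) Phi_perm //.
  by apply: simplex_add_evecB; rewrite ?ci ?cj //; exact: simplex_xC.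
have grad_v : \sum_k v 0 k * derive Phi c (evec R k) =
    derive Phi c (evec R i) - derive Phi c (evec R j).
  by under eq_bigr do rewrite !mxE mulrBl; rewrite sumrB !sum_delta_mul.
have grad_Nv : \sum_k (- v) 0 k * derive Phi c (evec R k) =
    - (derive Phi c (evec R i) - derive Phi c (evec R j)).
  by rewrite -grad_v -sumrN; apply: eq_bigr => k _; rewrite mxE mulNr.
have [_ Dv] := near_eq_is_derive even (Phi_c v).
have [_ DNv] := Phi_c (- v).
by move: Dv; rewrite DNv grad_v grad_Nv; lra.
Qed.

Definition gobj (y : 'rV[R]_n) : R := Phi y - \sum_k y 0 k ^+ 2.

Lemma gobj_le_xC (T : {set 'I_n}) y : (0 < #|T|)%N -> simplex y -> supp y \subset T ->
  gobj y <= gobj (xC T) ?= iff (y == xC T).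
Proof.
move=> T_gt0 sy yT; set c : 'rV[R]_n := xC T.
have [->|yc] := eqVneq y c; first exact/leif_refl.
have sc : simplex c by exact: simplex_xC.
have dE k : (y - c) 0 k = y 0 k - c 0 k by rewrite !mxE.
have c_on : {in T, forall k, c 0 k = #|T|%:R^-1} by move=> k kT; rewrite mxE kT.
have d_off : {in ~: T, forall k, (y - c) 0 k = 0}.
  move=> k; rewrite inE => kT; rewrite dE mxE (negbTE kT) subr0.
  by apply/eqP; apply: contraR kT => yk; apply: (fintype.subsetP yT); rewrite inE.
have d_sum : \sum_k (y - c) 0 k = 0.
  by under eq_bigr do rewrite dE; rewrite sumrB sy.2 sc.2 subrr.
have [i iT] := card_gt0P T_gt0.
have grad_d : \sum_k (y - c) 0 k * derive Phi c (evec R k) = 0.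
  apply: (sum_mul_eq0_const_on (g0 := derive Phi c (evec R i)) _ d_off d_sum).
  by move=> k kT; exact: partial_Phi_xC.
have cross : \sum_k (y - c) 0 k * c 0 k = 0 := sum_mul_eq0_const_on c_on d_off d_sum.
have sqr_y : \sum_k y 0 k ^+ 2 =
    \sum_k c 0 k ^+ 2 + 2 * \sum_k (y - c) 0 k * c 0 k + \sum_k (y - c) 0 k ^+ 2.
  by rewrite mulr_sumr -!big_split; apply: eq_bigr => k _ /=; rewrite dE; ring.
have := Phi_sub_tangent_lt sc sy; rewrite eq_sym yc grad_d subr0 => /(_ isT) lt_y.
have lt_gobj : gobj y < gobj c by rewrite /gobj sqr_y cross mulr0 addr0; lra.
by split; [exact: ltW | exact: lt_eqF].
Qed.

Lemma gobj_permv (s : 'S_n) y : simplex y -> gobj (permv s y) = gobj y.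
Proof. by move=> sy; rewrite /gobj Phi_perm // sum_sqr_permv. Qed.

Lemma gobj_xC_card (S T : {set 'I_n}) : #|S| = #|T| -> gobj (xC S) = gobj (xC T).
Proof.
move Dk : #|S :\: T| => k; elim: k T Dk => [|k IHk] T Dk ST.
  move/eqP: Dk; rewrite cards_eq0 finset.setD_eq0 => ST_sub.
  suff -> : S = T by [].
  by apply/eqP; rewrite eqEcard ST_sub ST /=.
have [a] : exists a, a \in S :\: T by apply/card_gt0P; rewrite Dk.
rewrite inE => /andP[aT aS].
have [b] : exists b, b \in T :\: S.
  by apply/card_gt0P; rewrite cardsD finset.setIC -ST -cardsD Dk.
rewrite inE => /andP[bS bT].
have T_gt0 : (0 < #|T|)%N by apply/card_gt0P; exists b.
have sT : simplex (xC T : 'rV[R]_n) by exact: simplex_xC.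
rewrite -(gobj_permv (tperm a b) sT) permv_tperm_xC //.
apply: IHk; last by rewrite cards_swap.
have -> : S :\: (a |: (T :\ b)) = (S :\: T) :\ a.
  apply/setP => x; rewrite !inE negb_or negb_and negbK.
  have [->|_] := eqVneq x b; first by rewrite bT (negbTE bS) !andbF.
  by rewrite /= andbA.
by move: Dk; rewrite (cardsD1 a) inE aT aS => -[].
Qed.

Lemma gobj_xC_le_card (S T : {set 'I_n}) : (0 < #|S|)%N -> (#|S| <= #|T|)%N ->
  gobj (xC S) <= gobj (xC T) ?= iff (#|S| == #|T|).
Proof.
move=> S_gt0 ST; have T_gt0 := leq_trans S_gt0 ST.
have : (0 < #|[set U : {set 'I_n} | U \subset T & #|U| == #|S|]|)%N.
  by rewrite cards_draws bin_gt0.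
case/card_gt0P => U; rewrite inE => /andP[UT /eqP US].
have U_gt0 : (0 < #|U|)%N by rewrite US.
have sU : simplex (xC U : 'rV[R]_n) by exact: simplex_xC.
have xC_eq : (xC U == xC T :> 'rV[R]_n) = (U == T).
  by apply/eqP/eqP => [E|->] //; rewrite -(supp_xC R U_gt0) E supp_xC.
rewrite (gobj_xC_card (esym US)) -US (subset_leqif_cards UT).2 -xC_eq.
by apply: gobj_le_xC; rewrite ?supp_xC.
Qed.

Variable adj : rel 'I_n.

Lemma gobj_le_max_clique C y : is_maximum_clique adj C -> simplex0 adj y ->
  gobj y <= gobj (xC C) ?= iff (y == xC (supp y)) && (#|supp y| == #|C|).
Proof.
move=> [_ C_max] [sy y_clique]; have y_gt0 := card_supp_gt0 sy.
exact: leif_trans (gobj_le_xC y_gt0 sy (subxx _)) (gobj_xC_le_card y_gt0 (C_max _ y_clique)).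
Qed.

Hypothesis adj_irrefl : forall i, ~~ adj i i.

Lemma fobj_simplex0 y : simplex0 adj y -> fobj adj Phi y = 1 + gobj y.
Proof.
move=> [[_ y1] y_clique]; rewrite /fobj /gobj.
suff -> : (y *m adjmx R adj *m y^T) 0 0 = 1 - \sum_k y 0 k ^+ 2 by lra.
have entry i j : y 0 i * (adj i j)%:R * y 0 j = y 0 i * y 0 j * (i != j)%:R.
  have [->|ij] := eqVneq i j; first by rewrite (negbTE (adj_irrefl j)) !mulr0 mul0r.
  have [->|yi] := eqVneq (y 0 i) 0; first by rewrite !mul0r.
  have [->|yj] := eqVneq (y 0 j) 0; first by rewrite !(mulr0, mul0r).
  by rewrite y_clique ?inE //= !mulr1.
rewrite mxE (eq_bigr (fun j => y 0 j - y 0 j ^+ 2)) ?sumrB ?y1 // => j _.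
rewrite !mxE mulr_suml (eq_bigr (fun i => y 0 i * y 0 j - (i == j)%:R * (y 0 i * y 0 j))).
  by rewrite sumrB sum_delta_mul -mulr_suml y1 mul1r expr2.
move=> i _; rewrite mxE entry.
by case: eqVneq => _; rewrite ?mulr1 ?mulr0 ?mul0r ?mul1r ?subr0 ?subrr.
Qed.

End Objective.

Theorem corollary1 (R : realType) (n : nat) (adj : rel 'I_n)
    (X : set 'rV[R]_n) (Phi : 'rV[R]_n -> R) :
  simple_graph adj ->
  open X -> simplex `<=` X ->
  C2_on X Phi ->
  (forall x, simplex x -> psd (hessian Phi x)) ->
  (forall x, simplex x -> opnorm2 (hessian Phi x) < 2) ->
  (forall x (s : 'S_n), simplex x -> Phi (permv s x) = Phi x) ->
  forall x : 'rV[R]_n, simplex0 adj x ->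
    ((forall y, simplex0 adj y -> fobj adj Phi y <= fobj adj Phi x) <->
     exists C : {set 'I_n}, is_maximum_clique adj C /\ x = xC C).
Proof.
move=> [_ adj_irrefl] X_open simplex_sub Phi_C2 _ hessian_lt2 Phi_perm x x0.
have gobj_le C y :=
  @gobj_le_max_clique R n Phi X X_open Phi_C2 simplex_sub hessian_lt2 Phi_perm adj C y.
split => [x_max | [C [C_max x_eq]] y y0]; last first.
  rewrite x_eq in x0 *; rewrite !fobj_simplex0 // lerD2l.
  exact: (gobj_le C y C_max y0).1.
have [C C_max] := exists_maximum_clique adj.
have C_gt0 : (0 < #|C|)%N := leq_trans (card_supp_gt0 x0.1) (C_max.2 _ x0.2).
have xC0 : simplex0 adj (xC C : 'rV[R]_n).
  by split; [exact: simplex_xC | rewrite supp_xC //; exact: C_max.1].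
have /andP[/eqP x_eq /eqP x_card] : (x == xC (supp x)) && (#|supp x| == #|C|).
  rewrite -(gobj_le C x C_max x0).2 eq_le (gobj_le C x C_max x0).1 /=.
  by rewrite -(lerD2l 1) -!(fobj_simplex0 _ adj_irrefl) //; exact: x_max.
exists (supp x); split => //; split => [|D D_clique]; first exact: x0.2.
by rewrite x_card; exact: C_max.2.
Qed.
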